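(* Let $i\in\{1,2\}$, let $(X,e_X,\mu_X)$ be an $\mathrm{NP}_i$-digital H-space, and let $(Y,e_Y)$ be a pointed digital image such that there are pointed continuous maps $f:(X,e_X)\to(Y,e_Y)$ and $g:(Y,e_Y)\to(X,e_X)$ with $g\circ f\simeq_i\mathrm{id}_X$ and $f\circ g\simeq_i\mathrm{id}_Y$. Define $\mu_Y=f\circ\mu_X\circ(g\times g):Y\times Y\to Y$. Then $(Y,e_Y,\mu_Y)$ is an $\mathrm{NP}_i$-digital H-space, and $(X,e_X,\mu_X)$ and $(Y,e_Y,\mu_Y)$ are H-equivalent (via $f$ and $g$).
   Context: A digital image is a finite set $X\subset\mathbb{Z}^n$ with a reflexive symmetric adjacency relation (a finite reflexive graph); continuous maps send adjacent points to adjacent points. On products, $\mathrm{NP}_u$ declares two tuples adjacent iff coordinates are adjacent in at most $u$ positions and equal elsewhere. An $\mathrm{NP}_i$-homotopy from $f$ to $g:X\to Y$ is an $\mathrm{NP}_i$-continuous $H:X\times[0,m]_{\mathbb{Z}}\to Y$ with $H(\cdot,0)=f$, $H(\cdot,m)=g$; write $f\simeq_i g$ (when $X$ is itself a product it carries the $\mathrm{NP}_i$ adjacency). $(f,g)(x)=(f(x),g(x))$, $(f\times g)(x,y)=(f(x),g(y))$; $c_e$ is the constant map at $e$. Pointed map: sends base point to base point. An $\mathrm{NP}_i$-digital H-space is $(X,e,\mu)$ with $\mu:X\times X\to X$ $\mathrm{NP}_i$-continuous, $\mu\circ(\mathrm{id}_X,c_e)\simeq_i\mathrm{id}_X$ and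 $\mu\circ(c_e,\mathrm{id}_X)\simeq_i\mathrm{id}_X$ (homotopies need not be pointed). Two $\mathrm{NP}_i$-digital H-spaces $(X,e_X,\mu_X)$, $(Y,e_Y,\mu_Y)$ are H-equivalent if there are continuous pointed maps $f:(X,e_X)\to(Y,e_Y)$, $g:(Y,e_Y)\to(X,e_X)$ with $f\circ g\simeq_i\mathrm{id}_Y$, $g\circ f\simeq_i\mathrm{id}_X$, $f\circ\mu_X\simeq_i\mu_Y\circ(f\times f)$ and $g\circ\mu_Y\simeq_i\mu_X\circ(g\times g)$. *)

From mathcomp Require Import all_boot.
Set Implicit Arguments. Unset Strict Implicit. Unset Printing Implicit Defensive.

Record dimg := DImg {
  carrier :> finType;
  adj : rel carrier;
  adj_refl : reflexive adj;
  adj_sym : symmetric adj }.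

Definition dcont (X Y : dimg) (f : X -> Y) : Prop :=
  forall x y, adj x y -> adj (f x) (f y).

Definition np_adj (u : nat) (X Y : dimg) : rel (X * Y)%type :=
  fun p q => [&& adj p.1 q.1, adj p.2 q.2 &
                 ((p.1 != q.1) + (p.2 != q.2) <= u)%N].

Lemma np_adj_refl u X Y : reflexive (@np_adj u X Y).
Proof. by move=> [x y]; rewrite /np_adj /= !adj_refl !eqxx. Qed.

Lemma np_adj_sym u X Y : symmetric (@np_adj u X Y).
Proof.
move=> [x y] [x' y']; rewrite /np_adj /=.
by rewrite (adj_sym x) (adj_sym y) (eq_sym x) (eq_sym y).
Qed.

Definition NP (u : nat) (X Y : dimg) : dimg :=
  @DImg (X * Y)%type (@np_adj u X Y) (@np_adj_refl u X Y) (@np_adj_sym u X Y).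

Definition iadj (m : nat) : rel 'I_m.+1 :=
  fun a b => ((a <= b.+1) && (b <= a.+1))%N.

Lemma iadj_refl (m : nat) : reflexive (@iadj m).
Proof. by move=> a; rewrite /iadj leqnSn. Qed.

Lemma iadj_sym (m : nat) : symmetric (@iadj m).
Proof. by move=> a b; rewrite /iadj andbC. Qed.

Definition dint (m : nat) : dimg := @DImg 'I_m.+1 (@iadj m) (@iadj_refl m) (@iadj_sym m).

(* NP_i-homotopy from f to g: an NP_i-continuous H : X x [0,m]_Z -> Y
   (X carrying its own adjacency, which is NP_i when X is a product). *)
Definition homotopic (i : nat) (X Y : dimg) (f g : X -> Y) : Prop :=
  exists (m : nat) (H : (X * 'I_m.+1)%type -> Y),
    [/\ @dcont (NP i X (dint m)) Y H,
        forall x, H (x, ord0) = f x &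
        forall x, H (x, ord_max) = g x].

(* NP_i-digital H-space (homotopies need not be pointed). *)
Definition is_Hspace (i : nat) (X : dimg) (e : X) (mu : (X * X)%type -> X) : Prop :=
  [/\ @dcont (NP i X X) X mu,
      homotopic i (fun x => mu (x, e)) id &
      homotopic i (fun x => mu (e, x)) id].

Definition H_equiv_via (i : nat) (X : dimg) (eX : X) (muX : (X * X)%type -> X)
    (Y : dimg) (eY : Y) (muY : (Y * Y)%type -> Y) (f : X -> Y) (g : Y -> X) : Prop :=
  [/\ dcont f /\ f eX = eY,
      dcont g /\ g eY = eX,
      homotopic i (f \o g) id /\ homotopic i (g \o f) id,
      @homotopic i (NP i X X) Y (f \o muX) (fun p => muY (f p.1, f p.2)) &
      @homotopic i (NP i Y Y) X (g \o muY) (fun p => muX (g p.1, g p.2))].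

(* Transporting the H-space structure along the homotopy equivalence works
   because NP_i-homotopy is an equivalence relation stable under pre- and
   post-composition with continuous maps and under products: a homotopy of
   one factor, with the other factor fixed, is again an NP_i-homotopy.
   Then mu_Y (y, e_Y) = f (mu_X (g y, e_X)) ~ f (g y) ~ y, and
   mu_Y o (f x f) = f o mu_X o (gf x gf) ~ f o mu_X because gf ~ id. *)
From mathcomp Require Import all_boot zify.
Set Implicit Arguments. Unset Strict Implicit. Unset Printing Implicit Defensive.

Lemma leq_neq_map (T U : eqType) (h : T -> U) (x y : T) :
  ((h x != h y) <= (x != y))%N.
Proof. by case: (x =P y) => [->|_]; rewrite ?eqxx // leq_b1. Qed.

Definition prod_map (X X' W W' : Type) (f : X -> X') (g : W -> W')
    (z : X * W) : X' * W' := (f z.1, g z.2).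

Lemma dcont_id (X : dimg) : dcont (@id X).
Proof. by []. Qed.

Lemma dcont_comp (X Y Z : dimg) (f : X -> Y) (g : Y -> Z) :
  dcont f -> dcont g -> dcont (g \o f).
Proof. by move=> fc gc x y /fc /gc. Qed.

Lemma dcont_prod_map i (X X' W W' : dimg) (f : X -> X') (g : W -> W') :
  dcont f -> dcont g -> @dcont (NP i X W) (NP i X' W') (prod_map f g).
Proof.
move=> fc gc [x w] [x' w'] /and3P [/= xx ww c].
rewrite /np_adj /= (fc _ _ xx) (gc _ _ ww).
exact: leq_trans (leq_add (leq_neq_map f x x') (leq_neq_map g w w')) c.
Qed.

Lemma dcont_swap i (X W : dimg) :
  @dcont (NP i X W) (NP i W X) (fun z => (z.2, z.1)).
Proof. by move=> [x w] [x' w'] /and3P [/= xx ww c]; rewrite /np_adj /= xx ww addnC. Qed.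

Lemma dcont_rev_ord m : @dcont (dint m) (dint m) (@rev_ord m.+1).
Proof.
move=> s t; rewrite /= /iadj /= => /andP [st ts].
by have := ltn_ord s; have := ltn_ord t; lia.
Qed.

Lemma dcont_inord_min m n :
  @dcont (dint (m + n)) (dint m) (fun t => inord (minn t m)).
Proof.
move=> s t; rewrite /= /iadj /= !inordK ?ltnS ?geq_minr //.
by move=> /andP [st ts]; lia.
Qed.

Lemma dcont_inord_subn m n :
  @dcont (dint (m + n)) (dint n) (fun t => inord (t - m)).
Proof.
move=> s t; rewrite /= /iadj /= !inordK;
  by have := ltn_ord s; have := ltn_ord t; lia.
Qed.

Section Homotopy.

Variable i : nat.

Lemma homotopic_eq (X Y : dimg) (f f' g g' : X -> Y) :
  f =1 f' -> g =1 g' -> homotopic i f g -> homotopic i f' g'.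
Proof.
move=> ef eg [m [H [Hc H0 H1]]]; exists m, H.
by split=> // x; rewrite -?ef -?eg.
Qed.

Lemma homotopic_comp_l (X Y Z : dimg) (k : Y -> Z) (f g : X -> Y) :
  dcont k -> homotopic i f g -> homotopic i (k \o f) (k \o g).
Proof.
move=> kc [m [H [Hc H0 H1]]]; exists m, (k \o H).
by split=> [|x|x]; rewrite /= ?H0 ?H1 //; apply: dcont_comp.
Qed.

Lemma homotopic_comp_r (W X Y : dimg) (h : W -> X) (f g : X -> Y) :
  dcont h -> homotopic i f g -> homotopic i (f \o h) (g \o h).
Proof.
move=> hc [m [H [Hc H0 H1]]]; exists m, (H \o prod_map h id).
split=> [|x|x]; rewrite /= /prod_map /= ?H0 ?H1 //.
exact: dcont_comp (dcont_prod_map hc (@dcont_id (dint m))) Hc.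
Qed.

Lemma homotopic_sym (X Y : dimg) (f g : X -> Y) :
  homotopic i f g -> homotopic i g f.
Proof.
move=> [m [H [Hc H0 H1]]]; exists m, (H \o prod_map id (@rev_ord m.+1)); split.
- exact: dcont_comp (dcont_prod_map (@dcont_id X) (@dcont_rev_ord m)) Hc.
- by move=> x; rewrite /= /prod_map -H1; congr H; congr pair; apply: val_inj => /=; lia.
- by move=> x; rewrite /= /prod_map -H0; congr H; congr pair; apply: val_inj => /=; lia.
Qed.

(* Concatenation: the two halves are reparametrised over [0, m1 + m2]; they
   agree at the seam m1, and adjacent times never lie strictly on both sides. *)
Lemma homotopic_trans (X Y : dimg) (f g h : X -> Y) :
  homotopic i f g -> homotopic i g h -> homotopic i f h.
Proof.
move=> [m1 [H1 [Hc1 H10 H11]]] [m2 [H2 [Hc2 H20 H21]]].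
pose K1 := H1 \o prod_map id (fun t : 'I_(m1 + m2).+1 => inord (minn t m1)).
pose K2 := H2 \o prod_map id (fun t : 'I_(m1 + m2).+1 => inord (t - m1)).
have K1c : @dcont (NP i X (dint (m1 + m2))) Y K1.
  exact: dcont_comp (dcont_prod_map (@dcont_id X) (@dcont_inord_min m1 m2)) Hc1.
have K2c : @dcont (NP i X (dint (m1 + m2))) Y K2.
  exact: dcont_comp (dcont_prod_map (@dcont_id X) (@dcont_inord_subn m1 m2)) Hc2.
pose K (z : X * 'I_(m1 + m2).+1) := if (z.2 <= m1)%N then K1 z else K2 z.
have K_K2 (z : X * 'I_(m1 + m2).+1) : (m1 <= z.2)%N -> K z = K2 z.
  move=> mt; rewrite /K; case: (leqP z.2 m1) => // tm; have /eqP tE : z.2 == m1 :> nat by lia.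
  rewrite /K1 /K2 /prod_map /= tE minnn subnn.
  have -> : inord m1 = ord_max :> 'I_m1.+1 by apply: val_inj; rewrite /= inordK.
  by rewrite H11 -H20; congr H2; congr pair; apply: val_inj; rewrite /= inordK.
exists (m1 + m2), K; split.
- move=> z z' zz'; have /and3P [_ /andP [t1 t2] _] := zz'.
  have [[z1 z1']|[z1 z1']] : (z.2 <= m1)%N /\ (z'.2 <= m1)%N \/ (m1 <= z.2)%N /\ (m1 <= z'.2)%N by lia.
  + by rewrite /K z1 z1'; apply: K1c.
  + by rewrite !K_K2 //; apply: K2c.
- move=> x; rewrite /K /K1 /prod_map /= -H10; congr H1; congr pair.
  by apply: val_inj; rewrite /= min0n inordK.
- move=> x; rewrite K_K2 /= ?leq_addr // /K2 /prod_map /= -H21; congr H2; congr pair.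
  by apply: val_inj; rewrite /= addKn inordK.
Qed.

Lemma homotopic_prod_mapl (X X' W W' : dimg) (p q : X -> X') (c : W -> W') :
  dcont c -> homotopic i p q ->
  @homotopic i (NP i X W) (NP i X' W') (prod_map p c) (prod_map q c).
Proof.
move=> cc [m [H [Hc H0 H1]]].
exists m, (fun z => (H (z.1.1, z.2), c z.1.2)).
split=> [|[x w]|[x w]]; rewrite /prod_map /= ?H0 ?H1 //.
move=> [[x w] t] [[x' w'] t'] /and3P [/and3P [/= xx ww cxw] /= tt ctw].
have Hxt : adj (H (x, t)) (H (x', t')).
  apply: Hc; rewrite /= /np_adj /= xx tt.
  exact: leq_trans (leq_add (leq_neq_map fst (x, w) (x', w')) (leqnn _)) ctw.
rewrite /np_adj /= Hxt (cc _ _ ww) /=.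
case: (t =P t') => [<-|/eqP tt'].
  exact: leq_trans (leq_add (leq_neq_map (fun a => H (a, t)) x x')
                            (leq_neq_map c w w')) cxw.
(* a time step moves only the homotopy coordinate, unless i >= 2 *)
rewrite tt' in ctw; case: ((x, w) =P (x', w')) ctw => [[<- <-]|_] ctw.
  by rewrite eqxx addn0; exact: leq_trans (leq_b1 _) ctw.
exact: leq_trans (leq_add (leq_b1 _) (leq_b1 _)) ctw.
Qed.

Lemma homotopic_prod_map (X X' W W' : dimg) (p q : X -> X') (p' q' : W -> W') :
  dcont q -> dcont p' -> homotopic i p q -> homotopic i p' q' ->
  @homotopic i (NP i X W) (NP i X' W') (prod_map p p') (prod_map q q').
Proof.
move=> qc p'c hpq hpq'.
apply: homotopic_trans (homotopic_prod_mapl p'c hpq) _.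
have := homotopic_comp_r (@dcont_swap i X W)
          (homotopic_comp_l (@dcont_swap i W' X') (homotopic_prod_mapl qc hpq')).
by apply: homotopic_eq.
Qed.

End Homotopy.

Theorem mainTheorem3 (i : nat) (hi : (i == 1) || (i == 2))
    (X : dimg) (eX : X) (muX : (X * X)%type -> X)
    (HX : is_Hspace i eX muX)
    (Y : dimg) (eY : Y) (f : X -> Y) (g : Y -> X)
    (fc : dcont f) (gc : dcont g) (fp : f eX = eY) (gp : g eY = eX)
    (hgf : homotopic i (g \o f) id) (hfg : homotopic i (f \o g) id) :
  let muY := fun p : (Y * Y)%type => f (muX (g p.1, g p.2)) in
  is_Hspace i eY muY /\ H_equiv_via i eX muX eY muY f g.
Proof.
move=> muY; case: HX => muXc Hr Hl.
have muXggc : @dcont (NP i Y Y) X (muX \o prod_map g g).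
  exact: dcont_comp (dcont_prod_map gc gc) muXc.
have gfc : dcont (g \o f) := dcont_comp fc gc.
have unit_law (u : X -> X) : homotopic i u id -> homotopic i (f \o u \o g) id.
  by move=> hu; apply: homotopic_trans hfg; apply: homotopic_comp_l fc (homotopic_comp_r gc hu).
split; first split.
- exact: dcont_comp muXggc fc.
- by apply: homotopic_eq (unit_law _ Hr) => // y; rewrite /muY /= gp.
- by apply: homotopic_eq (unit_law _ Hl) => // y; rewrite /muY /= gp.
split=> //.
- have gfgf := homotopic_prod_map (@dcont_id X) gfc hgf hgf.
  have := homotopic_sym (homotopic_comp_l (dcont_comp muXc fc) gfgf).
  by apply: homotopic_eq => -[a b].
- exact: homotopic_comp_r muXggc hgf.
Qed.
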